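(* Let $\mathbb{F}\in\{\mathbb{R},\mathbb{C}\}$ and let $A$ be an $\ell\times\ell$ matrix over $\mathbb{F}$ whose minimal polynomial equals its characteristic polynomial. Then there is an $\ell\times\ell\times2$ tensor $T$ over $\mathbb{F}$ of rank at most $1$ such that $(E_\ell;A)-T$ is diagonalizable over $\mathbb{F}$. In particular $\mathrm{rank}_{\mathbb{F}}(E_\ell;A)\le \ell+1$.
   Context: For matrices $A,B$ of the same size $m\times n$, $(A;B)$ denotes the $m\times n\times 2$ tensor with slices $A,B$; tensors are added slicewise. A rank-one tensor over $\mathbb{F}$ has the form $(\alpha\,\mathbf{a}\mathbf{b}^T;\beta\,\mathbf{a}\mathbf{b}^T)$ with nonzero $\mathbf{a},\mathbf{b}$ and $(\alpha,\beta)\neq0$; $\mathrm{rank}_{\mathbb{F}}(T)$ is the minimal number of rank-one tensors summing to $T$. $E_\ell$ is the $\ell\times\ell$ identity. An $m\times n\times 2$ tensor $(A;B)$ is diagonalizable over $\mathbb{F}$ if there are nonsingular $P,Q$ over $\mathbb{F}$ and diagonal $D_A,D_B$ with $PAQ=(D_A,O)$, $PBQ=(D_B,O)$ if $m\le n$, and $PAQ=(D_A,O)^T$, $PBQ=(D_B,O)^T$ if $m>n$. *)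

From HB Require Import structures.
From mathcomp Require Import all_boot all_order all_algebra.
Set Implicit Arguments. Unset Strict Implicit. Unset Printing Implicit Defensive.
Import Order.TTheory GRing.Theory Num.Theory.
Local Open Scope ring_scope.

(* An m x n x 2 tensor (A;B) is represented by the pair of its two slices. *)
Definition tensor2 (F : fieldType) (m n : nat) := ('M[F]_(m, n) * 'M[F]_(m, n))%type.

Definition tadd (F : fieldType) (m n : nat) (S T : tensor2 F m n) : tensor2 F m n :=
  (S.1 + T.1, S.2 + T.2).
Definition tsub (F : fieldType) (m n : nat) (S T : tensor2 F m n) : tensor2 F m n :=
  (S.1 - T.1, S.2 - T.2).
Definition tzero (F : fieldType) (m n : nat) : tensor2 F m n := (0, 0).

Definition rank_one_tensor (F : fieldType) (m n : nat) (T : tensor2 F m n) : Prop :=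
  exists (a : 'cV[F]_m) (b : 'cV[F]_n) (alpha beta : F),
    [/\ a != 0, b != 0, (alpha, beta) != (0, 0) &
        T = (alpha *: (a *m b^T), beta *: (a *m b^T))].

Definition tensor_rank_le (F : fieldType) (m n : nat) (T : tensor2 F m n) (r : nat)
  : Prop :=
  exists s : seq (tensor2 F m n),
    [/\ (size s <= r)%N, (forall U, U \in s -> rank_one_tensor U) &
        T = foldr (@tadd F m n) (@tzero F m n) s].

(* Diagonalizability over F: nonsingular P, Q with P A Q = (D_A, O) (resp. its
   transpose-shaped analogue when m > n) and P B Q = (D_B, O), D_A, D_B diagonal.
   Both shapes say exactly: every entry (i, j) with i <> j of P A Q and P B Q
   is zero. *)
Definition diagonalizable_tensor (F : fieldType) (m n : nat) (T : tensor2 F m n)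
  : Prop :=
  exists (P : 'M[F]_m) (Q : 'M[F]_n),
    [/\ P \in unitmx, Q \in unitmx,
        (forall (i : 'I_m) (j : 'I_n), nat_of_ord i != nat_of_ord j ->
            (P *m T.1 *m Q) i j = 0) &
        (forall (i : 'I_m) (j : 'I_n), nat_of_ord i != nat_of_ord j ->
            (P *m T.2 *m Q) i j = 0)].

Definition theorem3_claim (F : fieldType) : Prop :=
  forall (k : nat) (A : 'M[F]_k.+1),
    mxminpoly A = char_poly A ->
    (exists T : tensor2 F k.+1 k.+1,
        tensor_rank_le T 1 /\
        diagonalizable_tensor (tsub ((1%:M : 'M[F]_k.+1), A) T))
    /\ tensor_rank_le ((1%:M : 'M[F]_k.+1), A) k.+2.

From HB Require Import structures.
From mathcomp Require Import all_boot all_order all_algebra.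
From Stdlib Require Import Classical.
Set Implicit Arguments. Unset Strict Implicit. Unset Printing Implicit Defensive.
Import Order.TTheory GRing.Theory Num.Theory.
Local Open Scope ring_scope.

(* Proof of Theorem 3 over any field of characteristic zero (this covers R
   and C).  Let A be l x l with minimal polynomial equal to its characteristic
   polynomial.  Such an A has a cyclic vector v: the Krylov matrix S with rows
   v, vA, ..., vA^(l-1) is invertible.  To find v we cover the proper divisors
   of the minimal polynomial by finitely many of them and pick v outside the
   finitely many kernels of the corresponding matrices f(A), which is possible
   over an infinite field.  In the basis S, A is a companion matrix up to a
   correction in its last row, so for q = (X - 0)(X - 1)...(X - (l-1)) there
   is a rank-one a b^T with S (A - a b^T) S^-1 the companion matrix of q, which
   the Vandermonde matrix V of 0, ..., l-1 diagonalizes.  Hence P = V^-1 S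
   diagonalizes the tensor (E; A) - (0; a b^T), and since a diagonalizable
   l x l x 2 tensor is a sum of l tensors of rank at most one, the rank of
   (E; A) is at most l + 1.  The file first develops tensor rank, then
   polynomial divisors and kernel avoidance, then Krylov and companion
   matrices, and finally assembles the theorem. *)

Lemma size_index_enum_ord (n : nat) : size (index_enum 'I_n) = n.
Proof. by rewrite [index_enum _]unlock -enumT size_enum_ord. Qed.

Section TensorRank.
Variables (F : fieldType) (m n : nat).
Implicit Types (S T : tensor2 F m n) (s : seq (tensor2 F m n)).

Lemma foldr_tadd s :
  foldr (@tadd F m n) (@tzero F m n) s = (\sum_(U <- s) U.1, \sum_(U <- s) U.2).
Proof. by elim: s => [|U s IHs] /=; rewrite ?big_nil ?big_cons ?IHs. Qed.

Lemma tensor_rank_le_outer (a : 'cV[F]_m) (b : 'cV[F]_n) (alpha beta : F) :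
  tensor_rank_le (alpha *: (a *m b^T), beta *: (a *m b^T)) 1.
Proof.
have [-> | a0] := eqVneq a 0.
  by exists [::]; split=> //; rewrite /tzero /= mul0mx !scaler0.
have [-> | b0] := eqVneq b 0.
  by exists [::]; split=> //; rewrite /tzero /= trmx0 mulmx0 !scaler0.
have [ab0 | nab0] := eqVneq (alpha, beta) (0, 0).
  by case: ab0 => -> ->; exists [::]; split=> //; rewrite /tzero /= !scale0r.
exists [:: (alpha *: (a *m b^T), beta *: (a *m b^T))].
split=> // [U|]; last by rewrite /= /tadd /= !addr0.
by rewrite inE => /eqP->; exists a, b, alpha, beta.
Qed.

Lemma tensor_rank_le_add S T r1 r2 :
  tensor_rank_le S r1 -> tensor_rank_le T r2 -> tensor_rank_le (tadd S T) (r1 + r2).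
Proof.
move=> [s1 [le1 rk1 ->]] [s2 [le2 rk2 ->]]; exists (s1 ++ s2); split.
- by rewrite size_cat leq_add.
- by move=> U; rewrite mem_cat => /orP[/rk1 | /rk2].
- by rewrite !foldr_tadd /tadd /= !big_cat.
Qed.

Lemma tensor_rank_le_sum (I : Type) (r : seq I) (T : I -> tensor2 F m n) :
  (forall i, tensor_rank_le (T i) 1) ->
  tensor_rank_le (\sum_(i <- r) (T i).1, \sum_(i <- r) (T i).2) (size r).
Proof.
move=> rkT; elim: r => [|i r IHr]; first by exists [::]; rewrite !big_nil.
by rewrite !big_cons; apply: (tensor_rank_le_add (rkT i) IHr).
Qed.

End TensorRank.

(* A diagonalizable l x l x 2 tensor is a sum of l tensors of rank at most one:
   writing P D Q = (diag d1; diag d2), D is the sum over i of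
   (d1_i; d2_i) (P^-1 e_i)(e_i^T Q^-1). *)
Lemma diagonalizable_tensor_rank (F : fieldType) (n : nat) (D : tensor2 F n n) :
  diagonalizable_tensor D -> tensor_rank_le D n.
Proof.
case: D => D1 D2 [P [Q [Pu Qu /is_diag_mxP/diag_mxP[d1 /= e1]
                               /is_diag_mxP/diag_mxP[d2 /= e2]]]].
pose a (i : 'I_n) : 'cV[F]_n := invmx P *m delta_mx i 0.
pose b (i : 'I_n) : 'cV[F]_n := (delta_mx 0 i *m invmx Q)^T.
have abE i : a i *m (b i)^T = invmx P *m delta_mx i i *m invmx Q.
  by rewrite trmxK !mulmxA -(mulmxA _ (delta_mx i 0)) mul_delta_mx.
have sliceE (M : 'M[F]_n) d : P *m M *m Q = diag_mx d ->
    M = \sum_i d 0 i *: (a i *m (b i)^T).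
  move=> eM; rewrite -[M](mulKmx Pu) -[_ *m M](mulmxK Qu) eM diag_mx_sum_delta.
  rewrite mulmx_suml mulmx_sumr; apply: eq_bigr => i _.
  by rewrite abE mulmxA -scalemxAr -scalemxAl.
have := tensor_rank_le_sum (index_enum 'I_n)
  (T := fun i => (d1 0 i *: (a i *m (b i)^T), d2 0 i *: (a i *m (b i)^T)))
  (fun i => tensor_rank_le_outer _ _ _ _).
by rewrite /= size_index_enum_ord -(sliceE _ _ e1) -(sliceE _ _ e2).
Qed.

Section Divisors.
Variable F : fieldType.
Implicit Types p q d f : {poly F}.

Lemma irreducible_divisor p :
  (1 < size p)%N -> exists2 q, irreducible_poly q & q %| p.
Proof.
elim: {p}(size p) {-2}p (leqnn (size p)) => [|N IHN] p szp p_gt1.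
  by rewrite ltnNge (leq_trans szp) in p_gt1.
have [[d [dp d_gt1 szd]] | irr] :=
  classic (exists d, [/\ d %| p, (1 < size d)%N & (size d < size p)%N]).
  have [q irr_q qd] := IHN d (leq_trans szd szp) d_gt1.
  by exists q => //; apply: dvdp_trans dp.
exists p => //; split=> // d d_neq1 dp; rewrite -dvdp_size_eqp //.
have p0 : p != 0 by rewrite -size_poly_gt0 ltnW.
have := dvdp_leq p0 dp; rewrite leq_eqVlt => /orP[// | szd]; exfalso; apply: irr.
exists d; split=> //; rewrite ltn_neqAle eq_sym d_neq1 /=.
by rewrite size_poly_gt0; apply: contraNneq p0 => d0; move: dp; rewrite d0 dvd0p.
Qed.

Lemma proper_divisor_cover p : p != 0 ->
  exists L : seq {poly F},
    (forall f, f \in L -> f %| p /\ (size f < size p)%N) /\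
    (forall d, d %| p -> (size d < size p)%N -> exists2 f, f \in L & d %| f).
Proof.
elim: {p}(size p) {-2}p (leqnn (size p)) => [|N IHN] p szp p0.
  by move: p0; rewrite -size_poly_gt0 ltnNge szp.
have [p_le1 | p_gt1] := leqP (size p) 1.
  exists [::]; split=> // d dp szd; have d0 : d = 0.
    by apply/eqP; rewrite -size_poly_leq0 -ltnS (leq_trans szd p_le1).
  by move: dp; rewrite d0 dvd0p (negPf p0).
have [q irr_q qp] := irreducible_divisor p_gt1.
have q0 := irredp_neq0 irr_q; have q_gt1 := irr_q.1.
set r := p %/ q; have pE : p = r * q by rewrite divpK.
have r0 : r != 0 by apply: contraNneq p0 => r0; rewrite pE r0 mul0r.
have size_Mq f : f != 0 -> size (f * q) = (size f + (size q).-1)%N.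
  by move=> f0; rewrite size_mul // -!subn1 addnBA // ltnW.
have ltn_size_Mq f : f != 0 -> (size (f * q)%R < size p)%N = (size f < size r)%N.
  by move=> f0; rewrite pE !size_Mq // ltn_add2r.
have szr : (size r < size p)%N.
  rewrite [in X in (_ < X)%N]pE size_Mq //.
  by rewrite -[X in (X < _)%N]addn0 ltn_add2l ltn_predRL.
have [Lr [Lr_div Lr_cover]] := IHN r (leq_trans szr szp) r0.
exists (r :: [seq f * q | f <- Lr]); split.
  move=> _ /predU1P[-> | /mapP[f fLr ->]].
    by split=> //; rewrite [X in _ %| X]pE dvdp_mulIl.
  have [fr szf] := Lr_div f fLr.
  have f0 : f != 0 by apply: contraNneq r0 => f0; move: fr; rewrite f0 dvd0p.
  by rewrite ltn_size_Mq // [X in _ %| X]pE dvdp_mul2r.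
move=> d dp szd.
have [gq1 | gq] := irredp_XsubCP irr_q (dvdp_gcdr d q).
  have cop_dq : coprimep d q by rewrite coprimep_def (eqp_size gq1) size_poly1.
  by exists r; rewrite ?inE ?eqxx // -(Gauss_dvdpl _ cop_dq) -pE.
have qd : q %| d by rewrite -(eqp_dvdl _ gq) dvdp_gcdl.
have [d' dE] := dvdpP _ _ qd.
have d'0 : d' != 0.
  by apply: contraNneq p0 => d'0; move: dp; rewrite dE d'0 mul0r dvd0p.
have d'r : d' %| r by rewrite -(dvdp_mul2r _ _ q0) -dE -pE.
have szd' : (size d' < size r)%N by rewrite -ltn_size_Mq // -dE.
have [f fLr d'f] := Lr_cover d' d'r szd'.
exists (f * q); first by rewrite inE (map_f (fun f => f * q)) ?orbT.
by rewrite dE dvdp_mul2r.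
Qed.
End Divisors.

(* A nonzero polynomial over a field of characteristic zero does not vanish
   everywhere: it cannot have the size P distinct roots 0, 1, ..., size P - 1. *)
Lemma exists_nonroot (F : numDomainType) (P : {poly F}) :
  P != 0 -> exists t, ~~ root P t.
Proof.
move=> P0; pose ts := [seq i%:R : F | i <- iota 0 (size P)].
have [all_roots | /allPn[t _ nt]] := boolP (all (root P) ts); last by exists t.
have uniq_ts : uniq ts.
  by rewrite map_inj_uniq ?iota_uniq // => i j /eqP; rewrite eqr_nat => /eqP.
by have := max_poly_roots P0 all_roots uniq_ts; rewrite size_map size_iota ltnn.
Qed.

Lemma kernels_avoided_on_line (F : fieldType) (n : nat) (v w : 'rV[F]_n)
    (Ms : seq 'M[F]_n) :
  (forall M, M \in Ms -> v *m M != 0) ->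
  exists2 P : {poly F}, P != 0 &
    forall t, ~~ root P t -> forall M, M \in Ms -> (v + t *: w) *m M != 0.
Proof.
elim: Ms => [|M Ms IHMs] vMs; first by exists 1; rewrite ?oner_eq0.
have [P P0 P_ok] : exists2 P : {poly F}, P != 0 &
    forall t, ~~ root P t -> forall N, N \in Ms -> (v + t *: w) *m N != 0.
  by apply: IHMs => N NMs; apply: vMs; rewrite inE NMs orbT.
have /rV0Pn[j vMj] := vMs M (mem_head _ _).
pose f := ((v *m M) 0 j)%:P + ((w *m M) 0 j) *: 'X.
have fE t : f.[t] = ((v + t *: w) *m M) 0 j.
  by rewrite !hornerE mulmxDl -scalemxAl !mxE mulrC.
have f0 : f != 0.
  apply: contraNneq vMj => f0.
  by move: (fE 0); rewrite f0 horner0 scale0r addr0 => <-.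
exists (f * P) => [|t]; first by rewrite mulf_neq0.
rewrite rootM negb_or => /andP[ft Pt] N /predU1P[-> | NMs]; last exact: P_ok.
by apply: contraNneq ft => vwM0; rewrite /root fE vwM0 mxE.
Qed.

Lemma avoid_kernels (F : numFieldType) (n : nat) (Ms : seq 'M[F]_n) :
  (forall M, M \in Ms -> M != 0) ->
  exists v : 'rV[F]_n, forall M, M \in Ms -> v *m M != 0.
Proof.
elim: Ms => [|M Ms IHMs] Ms_neq0; first by exists 0.
have [v v_ok] : exists v : 'rV[F]_n, forall N, N \in Ms -> v *m N != 0.
  by apply: IHMs => N NMs; apply: Ms_neq0; rewrite inE NMs orbT.
have [vM0 | vM] := eqVneq (v *m M) 0; last first.
  by exists v => N /predU1P[-> | /v_ok].
have [w wM] : exists w : 'rV[F]_n, w *m M != 0.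
  by have /rowV0Pn[_ /submxP[w ->] wM] := Ms_neq0 M (mem_head _ _); exists w.
have [P P0 P_ok] := kernels_avoided_on_line w v_ok.
have XP0 : 'X * P != 0 by rewrite mulf_neq0 ?polyX_eq0.
have [t] := exists_nonroot XP0; rewrite rootM rootX negb_or => /andP[t0 Pt].
exists (v + t *: w) => N /predU1P[-> | /(P_ok t Pt) //].
by rewrite mulmxDl vM0 add0r -scalemxAl scaler_eq0 negb_or t0.
Qed.

Section Krylov.
Variables (F : fieldType) (k : nat).
Local Notation n := k.+1.
Implicit Types (A : 'M[F]_n) (v c : 'rV[F]_n) (g p : {poly F}).

Definition krylov_mx v A : 'M[F]_n := \matrix_(i < n) (v *m A ^+ i).

Lemma mul_krylov_mx v c A : c *m krylov_mx v A = v *m horner_mx A (rVpoly c).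
Proof.
rewrite mulmx_sum_row [rVpoly c]poly_def rmorph_sum mulmx_sumr.
apply: eq_bigr => i _; rewrite rowK valK /= linearZ rmorphXn /= horner_mx_X.
by rewrite scalemxAr.
Qed.

(* The polynomials g with v g(A) = 0 form an ideal, hence it contains the
   gcd of any two of its elements. *)
Lemma annihilator_gcdp A v g p :
  v *m horner_mx A g = 0 -> v *m horner_mx A p = 0 ->
  v *m horner_mx A (gcdp g p) = 0.
Proof.
move=> vg vp; have /eqpP[[c1 c2] /= /andP[c1_neq0 _] eq_gcd] := egcdpE g p.
have ann h : v *m horner_mx A (h * g) = 0 /\ v *m horner_mx A (h * p) = 0.
  by rewrite ![h * _]mulrC !rmorphM /= -!mulmxE !mulmxA vg vp !mul0mx.
suff : c1 *: (v *m horner_mx A (gcdp g p)) = 0.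
  by move/eqP; rewrite scaler_eq0 (negPf c1_neq0) => /eqP.
rewrite scalemxAr -horner_mxZ eq_gcd horner_mxZ rmorphD /= -scalemxAr mulmxDr.
by rewrite (ann _).1 (ann _).2 addr0 scaler0.
Qed.

(* The companion matrix of q acting on row vectors (the shape of the library's
   companionmx, with its dimension fixed to n): row i is e_(i+1) for i < n - 1
   and the last row is -(q_0, ..., q_(n-1)). *)
Definition companion (q : {poly F}) : 'M[F]_n :=
  \matrix_(i, j) if i == ord_max then - q`_j else (i.+1 == j :> nat)%:R.

Lemma row_companion_lift (q : {poly F}) (i : 'I_k) :
  row (lift ord_max i) (companion q) = delta_mx 0 (lift ord0 i).
Proof.
apply/rowP => j; rewrite !mxE eq_sym (negPf (neq_lift _ _)) lift_max eqxx.
by rewrite -val_eqE /= eq_sym.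
Qed.

Lemma row_companion_max (q : {poly F}) :
  row ord_max (companion q) = - poly_rV q.
Proof. by apply/rowP => j; rewrite !mxE eqxx. Qed.

(* Multiplication by A shifts the Krylov rows of v; in the companion basis of
   any q only the last row is corrected, by v A^n + (q_0, ..., q_(n-1)) S. *)
Lemma krylov_shift (v : 'rV[F]_n) (A : 'M[F]_n) (q : {poly F}) :
  krylov_mx v A *m A = companion q *m krylov_mx v A +
    delta_mx ord_max 0 *m (v *m A ^+ n + poly_rV q *m krylov_mx v A).
Proof.
have powS m : A ^+ m *m A = A ^+ m.+1 by rewrite exprSr mulmxE.
apply/row_matrixP => i; rewrite !row_mul linearD /= !row_mul rowK -mulmxA powS.
case: (unliftP ord_max i) => [j ->|->].
  have -> : row (lift ord_max j) (delta_mx ord_max 0) = 0 :> 'rV[F]_1.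
    by apply/rowP => l; rewrite !mxE eq_sym (negPf (neq_lift _ _)).
  by rewrite mul0mx addr0 row_companion_lift -rowE rowK lift_max.
have -> : row ord_max (delta_mx ord_max 0 : 'cV[F]_n) = 1%:M.
  by apply/matrixP => l l'; rewrite !ord1 !mxE eqxx.
by rewrite mul1mx row_companion_max mulNmx [v *m _ + _]addrC addKr.
Qed.

Lemma companion_Vandermonde (q : {poly F}) (lam : 'rV[F]_n) :
  q \is monic -> size q = n.+1 -> (forall j, root q (lam 0 j)) ->
  companion q *m Vandermonde n lam = Vandermonde n lam *m diag_mx lam.
Proof.
move=> q_monic size_q q_lam; apply/row_matrixP => i; apply/rowP => j.
rewrite row_mul mul_mx_diag ![RHS]mxE [Vandermonde n lam i j]mxE -exprSr.
case: (unliftP ord_max i) => [i' ->|->].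
  by rewrite row_companion_lift -rowE !mxE lift_max.
rewrite row_companion_max mulNmx mxE.
have := q_lam j; rewrite /root (horner_coef_wide _ (eq_leq size_q)) big_ord_recr /=.
have -> : q`_n = 1 by move: q_monic; rewrite monicE lead_coefE size_q => /eqP.
rewrite mul1r addrC addr_eq0 => /eqP->; congr (- _); rewrite mxE.
by apply: eq_bigr => m _; rewrite !mxE.
Qed.
End Krylov.

Arguments companion {F k}.

(* Choose v outside the
   kernels of f(A) for the finitely many maximal proper divisors f of p_A;
   then no nonzero polynomial of degree < n can annihilate v, since its gcd
   with p_A would be a proper divisor of p_A annihilating v. *)
Lemma cyclic_vector (F : numFieldType) (k : nat) (A : 'M[F]_k.+1) :
  mxminpoly A = char_poly A -> exists v, krylov_mx v A \in unitmx.
Proof.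
move=> minA; set p := mxminpoly A.
have p0 : p != 0 by rewrite monic_neq0 // mxminpoly_monic.
have size_p : size p = k.+2 by rewrite /p minA size_char_poly.
have [L [L_div L_cover]] := proper_divisor_cover p0.
have [v v_ok] : exists v : 'rV[F]_k.+1,
    forall M, M \in map (horner_mx A) L -> v *m M != 0.
  apply: avoid_kernels => _ /mapP[f fL ->]; have [fp szf] := L_div f fL.
  have f0 : f != 0 by apply: contraNneq p0 => f0; move: fp; rewrite f0 dvd0p.
  by apply: contraTneq szf => /mxminpoly_min pf; rewrite -leqNgt dvdp_leq.
exists v; rewrite -row_free_unit -kermx_eq0; apply/rowV0P => c /sub_kermxP.
rewrite mul_krylov_mx => vc0; apply/eqP/contraT => c0.
set g := rVpoly c in vc0 *.
have g0 : g != 0 by apply: contra_neq c0 => g0; rewrite -[c]rVpolyK -/g g0 linear0.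
set d := gcdp g p.
have vd0 : v *m horner_mx A d = 0.
  by apply: annihilator_gcdp; rewrite // mx_root_minpoly mulmx0.
have szd : (size d < size p)%N.
  by rewrite (leq_ltn_trans (leq_gcdpl _ g0)) // size_p ltnS size_poly.
have [f fL /dvdpP[h fE]] := L_cover d (dvdp_gcdr g p) szd.
have := v_ok _ (map_f _ fL).
by rewrite fE mulrC rmorphM /= -mulmxE mulmxA vd0 mul0mx eqxx.
Qed.

Lemma Vandermonde_unit (F : fieldType) (n : nat) (lam : 'rV[F]_n) :
  injective (lam 0) -> Vandermonde n lam \in unitmx.
Proof.
move=> lam_inj; rewrite unitmxE unitfE det_Vandermonde.
apply/prodf_neq0 => i _; apply/prodf_neq0 => j lt_ij.
by rewrite subr_eq0; apply: contraTneq lt_ij => /lam_inj->; rewrite ltnn.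
Qed.

(* With S the Krylov matrix of a cyclic vector, a = S^-1 e_n and b^T the
   correction row of krylov_shift, S (A - a b^T) S^-1 is the companion matrix
   of q = prod_j (X - j), which the Vandermonde matrix V diagonalizes;
   take P = V^-1 S. *)
Lemma rank_one_perturbation_diagonal (F : numFieldType) (k : nat) (A : 'M[F]_k.+1) :
  mxminpoly A = char_poly A ->
  exists (a b : 'cV[F]_k.+1) (P : 'M[F]_k.+1),
    P \in unitmx /\ P *m (A - a *m b^T) = diag_mx (\row_j j%:R) *m P.
Proof.
move=> minA; have [v S_unit] := cyclic_vector minA.
set S := krylov_mx v A in S_unit.
set lam : 'rV[F]_k.+1 := \row_j j%:R.
set q := \prod_(j < k.+1) ('X - (lam 0 j)%:P).
have q_monic : q \is monic by apply: monic_prod_XsubC.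
have size_q : size q = k.+2 by rewrite size_prod_XsubC size_index_enum_ord.
have q_lam j : root q (lam 0 j).
  by rewrite /root horner_prod (bigD1 j) //= hornerXsubC subrr mul0r.
have lam_inj : injective (lam 0).
  by move=> i j /eqP; rewrite !mxE eqr_nat => /eqP/val_inj.
set V := Vandermonde k.+1 lam; have V_unit : V \in unitmx by apply: Vandermonde_unit.
pose a : 'cV[F]_k.+1 := invmx S *m delta_mx ord_max 0.
pose b : 'cV[F]_k.+1 := (v *m A ^+ k.+1 + poly_rV q *m S)^T.
exists a, b, (invmx V *m S); split; first by rewrite unitmx_mul unitmx_inv V_unit.
have perturbed : S *m (A - a *m b^T) = companion q *m S.
  by rewrite mulmxBr trmxK mulmxA /a mulKVmx // (krylov_shift _ _ q) addrK.
have CV : companion q *m V = V *m diag_mx lam by apply: companion_Vandermonde.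
rewrite -mulmxA perturbed !mulmxA; congr (_ *m S).
by rewrite -[LHS](mulmxK V_unit) -(mulmxA (invmx V)) CV mulmxA mulVmx // mul1mx.
Qed.

Lemma theorem3_claim_numField (F : numFieldType) : theorem3_claim F.
Proof.
move=> k A minA.
have [a [b [P [P_unit PAP]]]] := rank_one_perturbation_diagonal minA.
pose T : tensor2 F k.+1 k.+1 := (0 *: (a *m b^T), 1 *: (a *m b^T)).
have T_rank : tensor_rank_le T 1 := tensor_rank_le_outer a b 0 1.
have diagonalizable : diagonalizable_tensor (tsub (1%:M, A) T).
  exists P, (invmx P); split; rewrite ?unitmx_inv //; apply/is_diag_mxP => /=.
    by rewrite scale0r subr0 mulmx1 mulmxV // scalar_mx_is_diag.
  by rewrite scale1r PAP (mulmxK P_unit) diag_mx_is_diag.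
split; first by exists T.
have := tensor_rank_le_add T_rank (diagonalizable_tensor_rank diagonalizable).
by rewrite /tadd /tsub /= !subrKC add1n.
Qed.

(* Real closed fields cover F = R and numeric closed fields cover F = C. *)
Theorem mainTheorem3 :
  (forall R : rcfType, theorem3_claim R) /\
  (forall C : numClosedFieldType, theorem3_claim C).
Proof. by split=> F; apply: theorem3_claim_numField. Qed.
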